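(* Let $m,n\geq 2$. Let $\pi\in S(\mathbb{Z}_m)$ and $\pi_x\in S(\mathbb{Z}_n)$ for each $x\in\mathbb{Z}_m$, and define $\sigma\in S(\mathbb{Z}_m\times\mathbb{Z}_n)$ by $\sigma(x,y)=(\pi(x),\pi_x(y))$. Let $c\in S(\mathbb{Z}_m\times\mathbb{Z}_n)$ be given by $c(x,y)=(x+1,y)$ if $x\neq m-1$ and $c(x,y)=(x+1,y+1)$ if $x=m-1$. Let $i\in\mathbb{Z}_m$, let $b$ be a positive integer, and let $t$ be an integer such that the permutation $y\mapsto\pi_i(y+t)$ of $\mathbb{Z}_n$ has at least $b$ cycles. Then there is an integer $k$ such that $\sigma c^k$ has at least $b+1$ cycles.
   Context: $S(X)$ denotes the set of bijections of a finite set $X$; the number of cycles of a permutation counts fixed points as cycles. (Under the bijection $\mathbb{Z}_{mn}\to\mathbb{Z}_m\times\mathbb{Z}_n$, $r+mt\mapsto(r,t)$ for $0\le r<m$, $0\le t<n$, the map $c$ corresponds to $z\mapsto z+1$.) *)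

From HB Require Import structures.
From mathcomp Require Import all_boot all_order all_fingroup all_algebra.
Set Implicit Arguments. Unset Strict Implicit. Unset Printing Implicit Defensive.
Import GRing.Theory.
Local Open Scope ring_scope.

(* Number of cycles of a permutation (fixed points count as cycles). *)
Definition ncycles (T : finType) (s : {perm T}) : nat := #|porbits s|.

Definition zpow (T : finType) (s : {perm T}) (k : int) : {perm T} :=
  match k with
  | Posz n => (s ^+ n)%g
  | Negz n => (s ^- n.+1)%g
  end.

(* Functional composition f \o g of permutations (apply g first).
   Note: in MathComp (s * t) x = t (s x), hence the swap. *)
Definition perm_fcomp (T : finType) (f g : {perm T}) : {perm T} := (g * f)%g.

Section Constructions.
Variables m n : nat.

Definition sigma_fun (pi : {perm 'Z_m}) (pix : 'Z_m -> {perm 'Z_n})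
  (p : 'Z_m * 'Z_n) : 'Z_m * 'Z_n := (pi p.1, pix p.1 p.2).

Lemma sigma_inj pi pix : injective (sigma_fun pi pix).
Proof.
move=> [x y] [x' y'] [/perm_inj ex]; subst x' => /perm_inj ->; done.
Qed.

Definition sigma_perm pi pix : {perm 'Z_m * 'Z_n} := perm (@sigma_inj pi pix).

Definition c_fun (p : 'Z_m * 'Z_n) : 'Z_m * 'Z_n :=
  (p.1 + 1, if p.1 == (m.-1)%:R then p.2 + 1 else p.2).

Lemma c_inj : injective c_fun.
Proof.
move=> [x y] [x' y'] E.
have ex : x = x' by apply: (@addIr _ 1); exact: (congr1 fst E).
subst x'; have := congr1 snd E; rewrite /c_fun /=.
by case: ifP => _ => [/(@addIr _ 1) -> | ->].
Qed.

Definition c_perm : {perm 'Z_m * 'Z_n} := perm c_inj.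

Definition shift_fun (q : {perm 'Z_n}) (t : int) (y : 'Z_n) : 'Z_n :=
  q (y + t%:~R).

Lemma shift_inj q t : injective (shift_fun q t).
Proof. by move=> y y' /perm_inj; apply: (@addIr _ t%:~R). Qed.

Definition shift_perm q t : {perm 'Z_n} := perm (@shift_inj q t).

End Constructions.

From mathcomp Require Import all_boot all_order all_fingroup all_algebra zify.
Set Implicit Arguments. Unset Strict Implicit. Unset Printing Implicit Defensive.
Import GRing.Theory.

(* Choose k so that c^k sends (pi i, y) to (i, y + t) for every y.  Then
   sigma c^k maps the row {pi i} x Z_n onto itself, acting there as the
   permutation y |-> pi_i (y + t); its cycles on that row are the cycles of
   this permutation, and the other rows (there is one, as m >= 2) carry at
   least one more cycle. *)

Section IntertwinedPermutations.
Variables (T U : finType) (tau : {perm T}) (q : {perm U}) (f : U -> T).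
Hypotheses (f_inj : injective f) (f_intertwines : forall u, tau (f u) = f (q u)).

Lemma porbit_intertwine u : porbit tau (f u) = f @: porbit q u.
Proof.
have iterf j v : (tau ^+ j)%g (f v) = f ((q ^+ j)%g v).
  by rewrite !permX; elim: j => //= j ->; rewrite f_intertwines.
apply/setP => z; apply/porbitP/imsetP => [[j ->] | [w /porbitP [j ->] ->]].
  by exists ((q ^+ j)%g u); [exact: mem_porbit | rewrite iterf].
by exists j; rewrite iterf.
Qed.

Lemma ncycles_lt_intertwine p : (forall u, f u != p) -> ncycles q < ncycles tau.
Proof.
move=> p_notin_f.
have p_orbit_new : porbit tau p \notin [set f @: O | O : {set U} in porbits q].
  apply/imsetP => -[O _ pO].
  have /imsetP [u _ /esym/eqP] : p \in f @: O by rewrite -pO porbit_id.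
  by rewrite (negbTE (p_notin_f u)).
have orbits_sub :
    porbit tau p |: [set f @: O | O : {set U} in porbits q] \subset porbits tau.
  apply/subsetP => O /setU1P [-> | /imsetP [_ /imsetP [u _ ->] ->]].
    exact: imset_f.
  by rewrite -porbit_intertwine imset_f.
apply: leq_trans (subset_leq_card orbits_sub).
by rewrite cardsU1 p_orbit_new card_imset //; exact: imset_inj.
Qed.

End IntertwinedPermutations.

Section ShiftedRows.
Variables m n : nat.
Local Notation c := (c_perm m.+2 n.+2).
Local Open Scope ring_scope.

Lemma Zp_natr_eq_pred (u : nat) :
  ((u%:R : 'Z_m.+2) == (m.+2.-1)%:R) = (m.+2 %| u.+1)%N.
Proof.
by rewrite -(inj_eq (addIr 1)) !natr1 pchar_Zp // -val_eqE /= val_Zp_nat.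
Qed.

Lemma iter_c_perm (x : 'Z_m.+2) (y : 'Z_n.+2) j :
  iter j c (x, y) = ((x + j)%:R, y + ((x + j) %/ m.+2)%:R).
Proof.
elim: j => [|j IH]; first by rewrite addn0 natr_Zp divn_small ?addr0.
rewrite iterS IH permE /c_fun /= Zp_natr_eq_pred addnS divnS // natr1.
by case: (_ %| _)%N; rewrite ?add0n // add1n -addrA natr1.
Qed.

Lemma c_perm_translate (x x' : 'Z_m.+2) (t : int) :
  exists k : nat, forall y, (c ^+ k)%g (x, y) = (x', y + t%:~R).
Proof.
pose s := val (t%:~R - 1 : 'Z_n.+2).
exists (m.+2 - x + x' + m.+2 * s)%N => y; rewrite permX iter_c_perm.
have -> : (x + (m.+2 - x + x' + m.+2 * s) = s.+1 * m.+2 + x')%N.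
  by have : (x < m.+2)%N := ltn_ord x; nia.
rewrite divnMDl // divn_small // addn0.
by rewrite natrD natrM pchar_Zp // mulr0 add0r natr_Zp -natr1 natr_Zp subrK.
Qed.

Lemma ncycles_sigma_c_gt (pi : {perm 'Z_m.+2}) (pix : 'Z_m.+2 -> {perm 'Z_n.+2})
    (i : 'Z_m.+2) (t : int) :
  exists k : nat, (ncycles (shift_perm (pix i) t)
                   < ncycles (perm_fcomp (sigma_perm pi pix) (c ^+ k)%g))%N.
Proof.
have [k ck] := c_perm_translate (pi i) i t.
exists k; apply: (@ncycles_lt_intertwine _ _ _ _ (pair (pi i)) _ _ (pi i + 1, 0)).
- by move=> y y' [].
- by move=> y; rewrite /perm_fcomp permM ck !permE.
- move=> y; apply/eqP => -[/esym/eqP].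
  by rewrite -{2}[pi i]addr0 (inj_eq (addrI _)) oner_eq0.
Qed.

End ShiftedRows.

Theorem lemma4p9 (m n : nat) (hm : (2 <= m)%N) (hn : (2 <= n)%N)
  (pi : {perm 'Z_m}) (pix : 'Z_m -> {perm 'Z_n})
  (i : 'Z_m) (b : nat) (hb : (0 < b)%N) (t : int)
  (ht : (b <= ncycles (shift_perm (pix i) t))%N) :
  exists k : int,
    (b.+1 <= ncycles (perm_fcomp (sigma_perm pi pix) (zpow (c_perm m n) k)))%N.
Proof.
case: m hm pi pix i ht => [|[|m]] // _; case: n hn => [|[|n]] // _ pi pix i ht.
have [k hk] := ncycles_sigma_c_gt pi pix i t.
by exists (Posz k); exact: leq_ltn_trans ht hk.
Qed.
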